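(* For every countably infinite subset $C\subseteq(0,\infty)$ there exists a countable directed graph $E$ such that $$\{\beta_v : v\in\textstyle\bigcup_{\beta>0}E^0_{\beta\text{-reg}}\}=C.$$
   Context: For a countable directed graph $E$ and $v\in E^0$, $E^nv$ is the set of paths of length $n$ ending at $v$, $Z_v(\beta)=\sum_{n\ge0}|E^nv|e^{-\beta n}\in[0,\infty]$, $E^0_{\beta\text{-reg}}=\{v\in E^0:Z_v(\beta)<\infty\}$, and $\beta_v=\inf\{\beta\in\mathbb R:Z_v(\beta)<\infty\}$ (the critical inverse temperature of $v$). *)

From HB Require Import structures.
From mathcomp Require Import all_boot all_order all_algebra.
From mathcomp Require Import all_classical all_reals.
From mathcomp Require Import ereal topology normedtype sequences esum exp.
Set Implicit Arguments. Unset Strict Implicit. Unset Printing Implicit Defensive.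
Import Order.TTheory GRing.Theory Num.Theory.
Local Open Scope classical_set_scope.
Local Open Scope ring_scope.

(* A countable directed graph E = (E^0, E^1, r, s): vertices of a countType V,
   edges of a countType Ed, range and source maps r s : Ed -> V. *)

Fixpoint is_chain (V : Type) (Ed : choiceType) (s r : Ed -> V) (mu : seq Ed) : Prop :=
  match mu with
  | e :: ((f :: _) as t) => s e = r f /\ is_chain s r t
  | _ => True
  end.

(* E^n v : paths of length n ending at v (range r(mu) = r(e_1) = v);
   the unique path of length 0 ending at v is the vertex v itself, represented
   by the empty edge sequence. *)
Definition paths_to (V : Type) (Ed : choiceType) (s r : Ed -> V) (n : nat) (v : V) : set (seq Ed) :=
  [set mu | size mu = n /\ is_chain s r mu /\
            (match mu with [::] => True | e :: _ => r e = v end)].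

Definition card_paths_to (R : realType) (V : Type) (Ed : choiceType) (s r : Ed -> V)
    (n : nat) (v : V) : \bar R :=
  (\esum_(mu in paths_to s r n v) 1)%E.

Definition Zpart (R : realType) (V : Type) (Ed : choiceType) (s r : Ed -> V) (v : V) (beta : R)
    : \bar R :=
  (\sum_(0 <= n <oo) (card_paths_to R s r n v * (expR (- beta * n%:R))%:E))%E.

Definition beta_reg (R : realType) (V : Type) (Ed : choiceType) (s r : Ed -> V) (beta : R) : set V :=
  [set v | (Zpart s r v beta < +oo)%E].

Definition crit_temp (R : realType) (V : Type) (Ed : choiceType) (s r : Ed -> V) (v : V) : \bar R :=
  ereal_inf [set (b%:E)%E | b in [set b : R | (Zpart s r v b < +oo)%E]].

(* Enumerate C as c_0, c_1, ...  The graph is a disjoint union of rays: ray i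
   has vertices (i, 0), (i, 1), ..., and (i, m) receives w_i(m) parallel edges
   from (i, m+1), so |E^n (i, m)| = w_i(m) ... w_i(m+n-1).  With
   F_i(k) = floor(c_i k / ln 2) and w_i(m) = 2^(F_i(m+1) - F_i(m)) this product
   telescopes to 2^(F_i(m+n) - F_i(m)), which lies between e^(c_i n) / 2 and
   2 e^(c_i n).  A vertex whose path counts are e^(c n) up to a bounded factor
   has Z_v(beta) finite for beta > c and infinite for beta < c, hence beta_v = c. *)

From HB Require Import structures.
From mathcomp Require Import all_boot all_order all_algebra.
From mathcomp Require Import all_classical all_reals.
From mathcomp Require Import ereal topology normedtype sequences esum exp.
From mathcomp Require Import lra.
Import Order.TTheory GRing.Theory Num.Theory numFieldNormedType.Exports.
Local Open Scope classical_set_scope.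
Local Open Scope ring_scope.

Section PathCounts.
Variables (R : realType) (V : Type) (Ed : choiceType) (s r : Ed -> V).

Lemma paths_to0 v : paths_to s r 0 v = [set [::]].
Proof.
apply/seteqP; split => [mu [/size0nil -> _]|mu ->] //=.
Qed.

Lemma card_paths_to0 v : card_paths_to R s r 0 v = 1%E.
Proof. by rewrite /card_paths_to paths_to0 esum_set1. Qed.

Lemma paths_toS n v : paths_to s r n.+1 v =
  (fun p => p.1 :: p.2) @` ([set e | r e = v] `*`` (fun e => paths_to s r n (s e))).
Proof.
apply/seteqP; split.
- move=> [|e t] [//= sz [ch re]].
  exists (e, t) => //=; split => //; split; first by case: sz.
  by case: t sz ch => [|f t'] //= _ [-> ch].
- move=> _ [[e t] /= [re [sz [ch rt]]] <-].
  split; first by rewrite /= sz.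
  by split => //; case: t sz ch rt => [|f t'] //= _ ch ->.
Qed.

Lemma card_paths_toS n v : card_paths_to R s r n.+1 v =
  (\esum_(e in [set e | r e = v]) card_paths_to R s r n (s e))%E.
Proof.
rewrite /card_paths_to paths_toS esum_image ?esum_esum //.
by move=> [e1 t1] [e2 t2] _ _ /= [-> ->].
Qed.

End PathCounts.

Lemma nneseries_le_of_partial (R : realType) (u : nat -> R) (B : R) :
  (forall n, 0 <= u n) -> (forall N, \sum_(0 <= k < N) u k <= B) ->
  (\sum_(0 <= n <oo) (u n)%:E <= B%:E)%E.
Proof.
move=> u_ge0 partial_le.
have u_ge0E n : (0 <= n)%N -> xpredT n -> (0 <= (u n)%:E)%E by rewrite lee_fin.
rewrite (cvg_lim _ (ereal_nondecreasing_cvgn (ereal_nondecreasing_series u_ge0E))) //.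
by apply: ge_ereal_sup => _ [N _ <-] /=; rewrite sumEFin lee_fin.
Qed.

Lemma ereal_inf_threshold (R : realType) (P : set R) (c : R) :
  (forall b, c < b -> P b) -> (forall b, P b -> c <= b) ->
  ereal_inf [set b%:E | b in P] = c%:E.
Proof.
move=> above below; apply/eqP; rewrite eq_le; apply/andP; split.
  apply/lee_addgt0Pr => e e_gt0; apply: ereal_inf_lbound.
  by exists (c + e); [apply: above; rewrite ltrDl | rewrite EFinD].
by apply: le_ereal_inf_tmp => _ [b Pb <-]; rewrite lee_fin below.
Qed.

Section ExponentialGrowth.
Context {R : realType} {V : Type} {Ed : choiceType} {s r : Ed -> V} {v : V}.
Context {c : R} (d : R) {p : nat -> R}.
Hypothesis card_p : forall n, card_paths_to R s r n v = (p n)%:E.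
Hypothesis p_lower : forall n, expR (c * n%:R - d) <= p n.
Hypothesis p_upper : forall n, p n <= expR (c * n%:R + d).

Let term_ge0 (b : R) n : 0 <= p n * expR (- b * n%:R).
Proof. by rewrite mulr_ge0 ?expR_ge0 // (le_trans _ (p_lower n)) ?expR_ge0. Qed.

Lemma Zpart_growthE b :
  Zpart s r v b = (\sum_(0 <= n <oo) (p n * expR (- b * n%:R))%:E)%E.
Proof.
by apply: congr_lim; apply/funext => N; apply: eq_bigr => n _; rewrite card_p.
Qed.

(* Above c the series is dominated by the geometric series of ratio e^(c - b). *)
Lemma Zpart_growth_lt_pinfty b : c < b -> (Zpart s r v b < +oo)%E.
Proof.
move=> cb; rewrite Zpart_growthE.
set z := expR (c - b).
have z_gt0 : 0 < z by rewrite expR_gt0.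
have z_lt1 : `|z| < 1 by rewrite gtr0_norm // expR_lt1 subr_lt0.
apply: (@le_lt_trans _ _ (expR d * (1 - z)^-1)%:E); last by rewrite ltry.
apply: nneseries_le_of_partial => [n|N]; first exact: term_ge0.
apply: le_trans (geometric_le_lim N (expR_ge0 d) z_gt0 z_lt1).
rewrite seriesEnat; apply: ler_sum => k _; rewrite /geometric /=.
apply: le_trans (ler_wpM2r (expR_ge0 _) (p_upper k)) _.
by rewrite -expRD -expRM_natr -expRD ler_expR mulrBl; lra.
Qed.

(* Below c every term is at least e^(-d), so the terms do not tend to 0 and
   the series cannot converge. *)
Lemma Zpart_growth_diverges b : b < c -> ~ (Zpart s r v b < +oo)%E.
Proof.
rewrite Zpart_growthE => bc Zfin.
have term_lb k : expR (- d) <= p k * expR (- b * k%:R).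
  apply: le_trans (ler_wpM2r (expR_ge0 _) (p_lower k)).
  rewrite -expRD ler_expR.
  have : 0 <= (c - b) * k%:R by rewrite mulr_ge0 // subr_ge0 ltW.
  by rewrite mulrBl; lra.
have terms_to0 : (fun k => p k * expR (- b * k%:R)) @ \oo --> (0 : R).
  by apply: cvg_series_cvg_0; exact: nnseries_is_cvg.
have : expR (- d) <= 0 by apply: cvgr_to_ge terms_to0 _; exact: nearW.
by rewrite leNgt expR_gt0.
Qed.

Lemma crit_temp_of_growth : crit_temp R s r v = c%:E.
Proof.
apply: ereal_inf_threshold => [b|b Zfin]; first exact: Zpart_growth_lt_pinfty.
by case: leP => // /Zpart_growth_diverges.
Qed.

End ExponentialGrowth.

(* Ray graphs: the vertex (i, m) is the m-th vertex of ray i and receives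
   w i m parallel edges from (i, m+1); the edges are the triples (i, m, j)
   with j < w i m. *)
Section RayGraph.
Variables (R : realType) (w : nat -> nat -> nat).

Definition ray_edge := {x : nat * nat * nat | (x.2 < w x.1.1 x.1.2)%N}.
Definition ray_rng (e : ray_edge) : nat * nat := ((val e).1.1, (val e).1.2).
Definition ray_src (e : ray_edge) : nat * nat := ((val e).1.1, (val e).1.2.+1).

Lemma ray_srcE e i m : ray_rng e = (i, m) -> ray_src e = (i, m.+1).
Proof. by rewrite /ray_rng /ray_src => -[-> ->]. Qed.

Lemma esum_ray_in_edges (K : \bar R) i m : (0 <= K)%E ->
  (\esum_(e in [set e | ray_rng e = (i, m)]) K = K *+ w i m)%E.
Proof.
move=> K_ge0.
have label_bij : set_bij [set e | ray_rng e = (i, m)] `I_(w i m)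
    (fun e : ray_edge => (val e).2).
  split.
  - by move=> [[[i' m'] j] /= j_lt] [<- <-].
  - move=> [[[i1 m1] j1] ?] [[[i2 m2] j2] ?]; rewrite !inE /ray_rng /=.
    by move=> [? ?] [? ?] ?; subst; apply: val_inj.
  - by move=> j /= j_lt; exists (exist _ (i, m, j) j_lt).
rewrite -(@reindex_esum R _ _ _ _ _ (fun=> K) label_bij) esum_fset //.
by rewrite -fsbig_ord sumr_const card_ord.
Qed.

Lemma card_paths_ray n i m : card_paths_to R ray_src ray_rng n (i, m) =
  ((\prod_(m <= k < m + n) w i k)%N%:R)%:E.
Proof.
elim: n m => [|n IH] m; first by rewrite card_paths_to0 addn0 big_geq.
rewrite card_paths_toS (eq_esum (b := fun=> ((\prod_(m.+1 <= k < m.+1 + n)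
  w i k)%N%:R)%:E)); last by move=> e /ray_srcE ->; exact: IH.
rewrite esum_ray_in_edges ?lee_fin // -EFin_natmul -mulrnA addSnnS.
by rewrite (@big_ltn _ _ _ m) 1?mulnC // addnS ltnS leq_addr.
Qed.

End RayGraph.

Section DoublingRays.
Variables (R : realType) (c : nat -> R).
Hypothesis c_gt0 : forall i, 0 < c i.

Definition level i k : nat := Num.truncn (c i * k%:R / ln 2).
Definition doubling_weight i k : nat := (2 ^ (level i k.+1 - level i k))%N.

Local Notation E_src := (ray_src doubling_weight).
Local Notation E_rng := (ray_rng doubling_weight).

Let ln2_gt0 : 0 < ln (2 : R).
Proof. by rewrite ln_gt0 // ltr1n. Qed.

Lemma level_mono i : {homo level i : m n / (m <= n)%N}.
Proof.
move=> m n mn; apply: le_truncn; rewrite ler_pM2r ?invr_gt0 //.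
by rewrite ler_pM2l // ler_nat.
Qed.

Lemma level_bounds i k :
  (level i k)%:R * ln 2 <= c i * k%:R < ((level i k)%:R + 1) * ln 2.
Proof.
have /andP[lo hi] : (level i k)%:R <= c i * k%:R / ln 2 < (level i k).+1%:R.
  by apply: truncn_itv; rewrite divr_ge0 ?mulr_ge0 // ltW.
by rewrite -ler_pdivlMr // -ltr_pdivrMr // natr1 lo.
Qed.

Lemma card_paths_doubling i m n : card_paths_to R E_src E_rng n (i, m) =
  ((2 ^ (level i (m + n) - level i m))%N%:R)%:E.
Proof. by rewrite card_paths_ray -expn_sum telescope_sumn //; exact: level_mono. Qed.

Lemma doubling_count_bounds i m n :
  expR (c i * n%:R - ln 2) <= (2 ^ (level i (m + n) - level i m))%N%:R <=
  expR (c i * n%:R + ln 2).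
Proof.
have le_level := @level_mono i _ _ (leq_addr n m).
rewrite natrX -[X in X ^+ _]lnK ?posrE ?ltr0n // -expRM_natl natrB // !ler_expR.
have /andP[lo_mn hi_mn] := level_bounds i (m + n).
have /andP[lo_m hi_m] := level_bounds i m.
rewrite natrD mulrDr in lo_mn hi_mn; rewrite mulrDl in hi_m.
by rewrite mulrBl; apply/andP; split; lra.
Qed.

Lemma crit_temp_doubling i m : crit_temp R E_src E_rng (i, m) = (c i)%:E.
Proof.
apply: (crit_temp_of_growth (c := c i) (ln 2) (card_paths_doubling i m)) => n;
  by have /andP[] := doubling_count_bounds i m n.
Qed.

Lemma doubling_ray_regular i m :
  (\bigcup_(beta in [set b : R | 0 < b]) beta_reg E_src E_rng beta) (i, m).
Proof.
exists (c i + 1); first by rewrite /= addr_gt0.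
apply: (Zpart_growth_lt_pinfty (c := c i) (ln 2) (card_paths_doubling i m));
  last by rewrite ltrDl.
all: by move=> n; have /andP[] := doubling_count_bounds i m n.
Qed.

Lemma crit_temps_doubling_rays :
  [set crit_temp R E_src E_rng v | v in
    \bigcup_(beta in [set b : R | 0 < b]) beta_reg E_src E_rng beta]
  = range (fun i => (c i)%:E).
Proof.
apply/seteqP; split => [_ [[i m] _ <-]|_ [i _ <-]].
  by rewrite crit_temp_doubling; exists i.
by exists (i, 0%N); [exact: doubling_ray_regular | exact: crit_temp_doubling].
Qed.

End DoublingRays.

Theorem proposition6p12 (R : realType) (C : set R) :
  C `<=` [set x : R | 0 < x] -> countable C -> infinite_set C ->
  exists (V Ed : countType) (s r : Ed -> V),
    [set crit_temp R s r v | v in \bigcup_(beta in [set b : R | 0 < b]) beta_reg s r beta]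
    = [set (c%:E)%E | c in C].
Proof.
move=> C_pos C_count C_inf.
have [C0|/surjfunPex[c C_range]] := pfcard_geP C_count.
  by have /set0P := infinite_setN0 C_inf; rewrite C0 eqxx.
have c_gt0 i : 0 < c i by apply: C_pos; rewrite C_range; exists i.
pose w := doubling_weight R c.
exists (nat * nat)%type, (ray_edge w), (ray_src w), (ray_rng w).
by rewrite crit_temps_doubling_rays // C_range image_comp.
Qed.
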